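(* For all terms $s,t$ and $m\in\mathbb N$: $s\Downarrow^m t$ holds if and only if $s\succ^\ast_m t$ and $t$ is an abstraction.
   Context: Terms (de Bruijn): $s::=n\mid st\mid\lambda s$, size $|n|=1+n$, $|\lambda s|=1+|s|$, $|st|=1+|s|+|t|$. Substitution $k^k_u=u$, $n^k_u=n$ ($n\ne k$), $(st)^k_u=(s^k_u)(t^k_u)$, $(\lambda s)^k_u=\lambda(s^{k+1}_u)$. Reduction: $(\lambda s)(\lambda t)\succ s^0_{\lambda t}$; $s\succ s'\Rightarrow st\succ s't$; $t\succ t'\Rightarrow(\lambda s)t\succ(\lambda s)t'$. $s\succ^\ast_m t$ means there is a reduction sequence $s=s_0\succ s_1\succ\cdots\succ s_j=t$ ($j\ge0$) with $\max_{0\le i\le j}|s_i|=m$. The big-step relation $s\Downarrow^m t$ is defined inductively: $\lambda s\Downarrow^{|\lambda s|}\lambda s$; and if $s\Downarrow^{m_1}\lambda s'$, $t\Downarrow^{m_2}\lambda t'$, $s'^0_{\lambda t'}\Downarrow^{m_3}u$ and $m=\max(1+m_1+|t|,\ 1+|\lambda s'|+m_2,\ m_3)$, then $st\Downarrow^m u$. *)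

From Stdlib Require Import Arith Lia.

Inductive term : Type :=
| var : nat -> term
| app : term -> term -> term
| lam : term -> term.

Fixpoint size (s : term) : nat :=
  match s with
  | var n => 1 + n
  | app s t => 1 + size s + size t
  | lam s => 1 + size s
  end.

Fixpoint subst (s : term) (k : nat) (u : term) : term :=
  match s with
  | var n => if Nat.eqb n k then u else var n
  | app s t => app (subst s k u) (subst t k u)
  | lam s => lam (subst s (S k) u)
  end.

Inductive step : term -> term -> Prop :=
| stepBeta s t : step (app (lam s) (lam t)) (subst s 0 (lam t))
| stepAppL s s' t : step s s' -> step (app s t) (app s' t)
| stepAppR s t t' : step t t' -> step (app (lam s) t) (app (lam s) t').

(* red_max s t m : there is a reduction sequence s = s_0 > s_1 > ... > s_j = t
   (j >= 0) with m = max_i |s_i|. *)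
Inductive red_max : term -> term -> nat -> Prop :=
| red_refl s : red_max s s (size s)
| red_cons s s' t m : step s s' -> red_max s' t m -> red_max s t (Nat.max (size s) m).

Definition is_abs (t : term) : Prop := exists t', t = lam t'.

Inductive eval : term -> nat -> term -> Prop :=
| evalLam s : eval (lam s) (size (lam s)) (lam s)
| evalApp s t s' t' u m1 m2 m3 :
    eval s m1 (lam s') ->
    eval t m2 (lam t') ->
    eval (subst s' 0 (lam t')) m3 u ->
    eval (app s t) (Nat.max (1 + m1 + size t) (Nat.max (1 + size (lam s') + m2) m3)) u.

From Stdlib Require Import Arith Lia.

(* A derivation of [s ⇓^m u] linearises into the reduction sequence that first
   reduces the function part, then the argument, then fires the beta redex; the
   three phases contribute exactly the three terms of the maximum in [evalApp].
   Conversely, big-step evaluation is closed under expansion by one step, the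
   new maximum being the maximum of the old one and the size of the new term. *)

Lemma red_max_ge_src s t m : red_max s t m -> size s <= m.
Proof. intros H; destruct H; lia. Qed.

Lemma red_max_ge_tgt s t m : red_max s t m -> size t <= m.
Proof. intros H; induction H; lia. Qed.

Lemma red_max_trans a b c m1 m2 :
  red_max a b m1 -> red_max b c m2 -> red_max a c (Nat.max m1 m2).
Proof.
  intros H; revert c m2; induction H as [s | s s' t m Hstep _ IH]; intros c m2 H2.
  - pose proof (red_max_ge_src _ _ _ H2).
    replace (Nat.max (size s) m2) with m2 by lia; exact H2.
  - rewrite <- Nat.max_assoc; exact (red_cons _ _ _ _ Hstep (IH _ _ H2)).
Qed.

Lemma red_max_appL s t u m :
  red_max s t m -> red_max (app s u) (app t u) (1 + m + size u).
Proof.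
  intros H; induction H as [s | s s' t m Hstep _ IH].
  - apply red_refl.
  - replace (1 + Nat.max (size s) m + size u)
      with (Nat.max (size (app s u)) (1 + m + size u)) by (cbn [size]; lia).
    exact (red_cons _ _ _ _ (stepAppL _ _ _ Hstep) IH).
Qed.

Lemma red_max_appR a t t' m :
  red_max t t' m -> red_max (app (lam a) t) (app (lam a) t') (1 + size (lam a) + m).
Proof.
  intros H; induction H as [t | t t0 t' m Hstep _ IH].
  - apply red_refl.
  - replace (1 + size (lam a) + Nat.max (size t) m)
      with (Nat.max (size (app (lam a) t)) (1 + size (lam a) + m)) by (cbn [size]; lia).
    exact (red_cons _ _ _ _ (stepAppR _ _ _ Hstep) IH).
Qed.

Lemma eval_red_max s m t : eval s m t -> red_max s t m /\ is_abs t.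
Proof.
  intros H; induction H as [s | s t s' t' u m1 m2 m3 _ [R1 _] _ [R2 _] _ [R3 Habs]].
  - split; [apply red_refl | exists s; reflexivity].
  - split; [|exact Habs].
    pose proof (red_max_ge_tgt _ _ _ R2).
    assert (Rfun := red_max_appL _ _ t _ R1).
    assert (Rarg := red_max_appR s' _ _ _ R2).
    assert (Rbeta := red_cons _ _ _ _ (stepBeta s' t') R3).
    replace (Nat.max (1 + m1 + size t) (Nat.max (1 + size (lam s') + m2) m3))
      with (Nat.max (1 + m1 + size t)
              (Nat.max (1 + size (lam s') + m2)
                 (Nat.max (size (app (lam s') (lam t'))) m3))) by (cbn [size] in *; lia).
    exact (red_max_trans _ _ _ _ _ Rfun (red_max_trans _ _ _ _ _ Rarg Rbeta)).
Qed.

Lemma eval_ge_size s m t : eval s m t -> size s <= m.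
Proof. intros H; induction H; cbn [size] in *; lia. Qed.

Lemma eval_app_eq s t s' t' u m1 m2 m3 m :
  eval s m1 (lam s') -> eval t m2 (lam t') -> eval (subst s' 0 (lam t')) m3 u ->
  m = Nat.max (1 + m1 + size t) (Nat.max (1 + size (lam s') + m2) m3) ->
  eval (app s t) m u.
Proof. intros E1 E2 E3 ->; exact (evalApp _ _ _ _ _ _ _ _ E1 E2 E3). Qed.

Lemma eval_step_expand s s' m t :
  step s s' -> eval s' m t -> eval s (Nat.max (size s) m) t.
Proof.
  intros H; revert m t.
  induction H as [s t | s s' t _ IH | s t t' _ IH]; intros m u E.
  - eapply eval_app_eq; [apply evalLam | apply evalLam | exact E | cbn [size]; lia].
  - inversion E as [| ? ? ? ? ? ? ? ? E1 E2 E3]; subst.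
    eapply eval_app_eq; [exact (IH _ _ E1) | exact E2 | exact E3 | cbn [size]; lia].
  - inversion E as [| ? ? ? ? ? ? ? ? E1 E2 E3]; subst.
    inversion E1; subst.
    pose proof (eval_ge_size _ _ _ E2).
    eapply eval_app_eq; [exact E1 | exact (IH _ _ E2) | exact E3 | cbn [size] in *; lia].
Qed.

Lemma red_max_eval s t m : red_max s t m -> is_abs t -> eval s m t.
Proof.
  intros H Habs; induction H as [s | s s' t m Hstep _ IH].
  - destruct Habs as [t' ->]; apply evalLam.
  - exact (eval_step_expand _ _ _ _ Hstep (IH Habs)).
Qed.

Theorem lemmaA4 : forall (s t : term) (m : nat),
  eval s m t <-> (red_max s t m /\ is_abs t).
Proof.
  intros s t m; split.
  - apply eval_red_max.
  - intros [H Habs]; exact (red_max_eval _ _ _ H Habs).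
Qed.
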